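(* Let $\mathcal H$ be a regular hypergraph, $L=L_K(\mathcal H)$ and $E$ its underlying graph. The category $\mathfrak M_L$ of unital right $L$-modules is equivalent to the full subcategory of the category of quiver representations of $E$ consisting of those representations $\rho$ satisfying condition (H): for every $h\in\mathcal H^1$, the linear map $[\rho(h)]:\bigoplus_{i\in I_h}\rho(s(h)_i)\to\bigoplus_{j\in J_h}\rho(r(h)_j)$, $(x_i)_{i\in I_h}\mapsto\big(\sum_{i\in I_h}\rho(h_{ij})(x_i)\big)_{j\in J_h}$, is an isomorphism. Under this equivalence a module $M$ corresponds to the representation $\rho_M(v)=Mv$, $\rho_M(e)(m)=me$.
   Context: $K$ is a field. A hypergraph $\mathcal H=(\mathcal H^0,\mathcal H^1,s,r)$: vertex set $\mathcal H^0$, hyperedge set $\mathcal H^1$, and for each $h$ nonempty index sets $I_h,J_h$ with families $s(h)=(s(h)_i)_{i\in I_h}$, $r(h)=(r(h)_j)_{j\in J_h}$ of vertices; regular means all $I_h,J_h$ finite. $L_K(\mathcal H)$ is the $K$-algebra generated by $\{v,h_{ij},h_{ij}^*\}$ ($v\in\mathcal H^0$, $h\in\mathcal H^1$, $i\in I_h$, $j\in J_h$) subject to $uv=\delta_{u,v}u$; $s(h)_ih_{ij}=h_{ij}=h_{ij}r(h)_j$, $r(h)_jh_{ij}^*=h_{ij}^*=h_{ij}^*s(h)_i$; $\sum_{j}h_{ij}h_{kj}^*=\delta_{ik}s(h)_i$; $\sum_{i}h_{ij}^*h_{ik}=\delta_{jk}r(h)_j$. The underlying graph $E$ has $E^0=\mathcal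 H^0$, $E^1=\{h_{ij}\}$, $s(h_{ij})=s(h)_i$, $r(h_{ij})=r(h)_j$. A right $L$-module $M$ is unital if $M=\sum_{v\in\mathcal H^0}Mv$. A quiver representation $\rho$ of $E$ assigns a $K$-vector space $\rho(v)$ to each vertex and a linear map $\rho(e):\rho(s(e))\to\rho(r(e))$ to each edge; morphisms are families of linear maps $\phi_v:\rho(v)\to\rho'(v)$ with $\phi_{r(e)}\circ\rho(e)=\rho'(e)\circ\phi_{s(e)}$. *)

From HB Require Import structures.
From mathcomp Require Import all_boot all_order all_algebra.
Set Implicit Arguments. Unset Strict Implicit. Unset Printing Implicit Defensive.
Import GRing.Theory.
Local Open Scope ring_scope.

(* For an idempotent f = ( _ * v) this is exactly the corner  M v.            *)

Definition fixpred (K : fieldType) (M : lmodType K) (f : {linear M -> M}) : {pred M} :=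
  [pred x | f x == x].

Lemma fixpred_submod (K : fieldType) (M : lmodType K) (f : {linear M -> M}) :
  GRing.submod_closed (fixpred f).
Proof.
split; first by rewrite inE linear0.
move=> a u v; rewrite !inE => /eqP fu /eqP fv.
by rewrite linearP fu fv.
Qed.

HB.instance Definition _ (K : fieldType) (M : lmodType K) (f : {linear M -> M}) :=
  GRing.isSubmodClosed.Build K M (fixpred f) (fixpred_submod f).

Definition fixsp (K : fieldType) (M : lmodType K) (f : {linear M -> M}) :=
  {x : M | x \in fixpred f}.

HB.instance Definition _ (K : fieldType) (M : lmodType K) (f : {linear M -> M}) :=
  [isSub for (@sval M (fun x => x \in fixpred f)) : fixsp f -> M].
HB.instance Definition _ (K : fieldType) (M : lmodType K) (f : {linear M -> M}) :=
  [Choice of fixsp f by <:].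
HB.instance Definition _ (K : fieldType) (M : lmodType K) (f : {linear M -> M}) :=
  [SubChoice_isSubLmodule of fixsp f by <:].

Section Hypergraph.

(* A hypergraph: vertex set V, hyperedge set HE; for each hyperedge h the     *)
(* index sets I h, J h (finite types: the hypergraph is regular) and the      *)
(* families s(h) = (s h i)_{i in I h}, r(h) = (r h j)_{j in J h}.             *)
Variables (K : fieldType) (V HE : Type) (I J : HE -> finType)
  (s : forall h, I h -> V) (r : forall h, J h -> V).

Record Edge := mkEdge { eh : HE; ei : I eh; ej : J eh }.
Definition src (e : Edge) : V := s (ei e).
Definition tgt (e : Edge) : V := r (ej e).

(* A right L_K(H)-module, L_K(H) being presented by generators and relations:*)
(* a K-vector space with K-linear right actions of the generators v, h_ij,   *)
(* h_ij^* satisfying the defining relations (m (ab) = (m a) b), and unital    *)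
(* in the sense M = sum_v M v.                                                *)
Record RMod := {
  mc :> lmodType K;
  actV : V -> {linear mc -> mc};
  actE : forall h (i : I h) (j : J h), {linear mc -> mc};
  actEs : forall h (i : I h) (j : J h), {linear mc -> mc};
  (* u v = delta_{u,v} u *)
  rel_VV : forall u m, actV u (actV u m) = actV u m;
  rel_VV0 : forall u v m, u <> v -> actV v (actV u m) = 0;
  (* s(h)_i h_ij = h_ij = h_ij r(h)_j *)
  rel_sE : forall h (i : I h) (j : J h) m, actE i j (actV (s i) m) = actE i j m;
  rel_Er : forall h (i : I h) (j : J h) m, actV (r j) (actE i j m) = actE i j m;
  (* r(h)_j h_ij^* = h_ij^* = h_ij^* s(h)_i *)
  rel_rEs : forall h (i : I h) (j : J h) m, actEs i j (actV (r j) m) = actEs i j m;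
  rel_Ess : forall h (i : I h) (j : J h) m, actV (s i) (actEs i j m) = actEs i j m;
  (* sum_j h_ij h_kj^* = delta_{i,k} s(h)_i *)
  rel_CK1 : forall h (i k : I h) m,
    \sum_(j : J h) actEs k j (actE i j m) = if i == k then actV (s i) m else 0;
  (* sum_i h_ij^* h_ik = delta_{j,k} r(h)_j *)
  rel_CK2 : forall h (j k : J h) m,
    \sum_(i : I h) actE i k (actEs i j m) = if j == k then actV (r j) m else 0;
  unital : forall m : mc, exists t : seq (V * mc), m = \sum_(p <- t) actV p.1 p.2
}.

Record RHom (M N : RMod) := {
  hf :> M -> N;
  hf_lin : linear hf;
  hf_V : forall v m, hf (actV M v m) = actV N v (hf m);
  hf_E : forall h (i : I h) (j : J h) m, hf (actE M i j m) = actE N i j (hf m);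
  hf_Es : forall h (i : I h) (j : J h) m, hf (actEs M i j m) = actEs N i j (hf m)
}.

Unset Implicit Arguments.

Record QRep := {
  rc : V -> lmodType K;
  rmap : forall e : Edge, rc (src e) -> rc (tgt e);
  rmap_lin : forall e, linear (rmap e)
}.

Record RepHom (rho rho' : QRep) := {
  phi :> forall v, rc rho v -> rc rho' v;
  phi_lin : forall v, linear (phi v);
  phi_comm : forall (e : Edge) (x : rc rho (src e)),
    phi (tgt e) (rmap rho e x) = rmap rho' e (phi (src e) x)
}.

Definition Hmap (rho : QRep) (h : HE)
  (x : forall i : I h, rc rho (s i)) : forall j : J h, rc rho (r j) :=
  fun j => (\sum_(i : I h) (rmap rho (mkEdge i j) (x i) : rc rho (r j)) : rc rho (r j)).

Definition condH (rho : QRep) : Prop := forall h : HE, bijective (Hmap rho h).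

Lemma corner_edge_proof (M : RMod) (e : Edge) (x : fixsp (actV M (src e))) :
  actE M (ei e) (ej e) (val x) \in fixpred (actV M (tgt e)).
Proof. by rewrite inE /tgt rel_Er. Qed.

Definition repOf_map (M : RMod) (e : Edge) (x : fixsp (actV M (src e))) :
  fixsp (actV M (tgt e)) :=
  exist _ (actE M (ei e) (ej e) (val x)) (corner_edge_proof M e x).

Lemma repOf_map_lin (M : RMod) (e : Edge) : linear (@repOf_map M e).
Proof. by move=> a x y; apply: val_inj; rewrite /= !linearP. Qed.

Definition repOf (M : RMod) : QRep :=
  {| rc := fun v => fixsp (actV M v);
     rmap := @repOf_map M;
     rmap_lin := @repOf_map_lin M |}.

Lemma corner_hom_proof (M N : RMod) (f : RHom M N) (v : V) (x : fixsp (actV M v)) :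
  f (val x) \in fixpred (actV N v).
Proof. by rewrite inE -hf_V; case: x => x /=; rewrite inE => /eqP ->. Qed.

Definition Fmor (M N : RMod) (f : RHom M N) (v : V) (x : fixsp (actV M v)) :
  fixsp (actV N v) := exist _ (f (val x)) (corner_hom_proof M N f v x).

End Hypergraph.

Arguments QRep K {V HE I J} s r.
Arguments rc {K V HE I J s r} _ _.
Arguments rmap {K V HE I J s r} _ _ _.
Arguments RepHom {K V HE I J s r} rho rho'.
Arguments phi {K V HE I J s r rho rho'} _ _ _.
Arguments Hmap {K V HE I J s r} rho h x _.
Arguments condH {K V HE I J s r} rho.
Arguments repOf {K V HE I J s r} M.
Arguments Fmor {K V HE I J s r M N} f v x.
Set Implicit Arguments.

From HB Require Import structures.
From mathcomp Require Import all_boot all_order all_algebra.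
From mathcomp Require Import boolp.
Set Implicit Arguments. Unset Strict Implicit. Unset Printing Implicit Defensive.
Import GRing.Theory.
Local Open Scope ring_scope.

(* A unital module M is the direct sum of its corners M v, and on the corners
   the defining relations of L_K(H) say exactly that the h_ij^* assemble into
   a two-sided inverse of the block matrix [rho_M(h)]: hence rho_M satisfies
   (H).  M |-> rho_M is faithful because an element of M is determined by its
   corners, and full because a morphism of representations glues over the
   finitely many corners of each element; compatibility with the h_ij^* is
   then forced by uniqueness of inverses.  Conversely, if rho satisfies (H),
   the finitely supported sections of rho form a unital module in which v
   acts by projection, h_ij by rho(h_ij) and h_ij^* by the (i, j) entry of
   [rho(h)]^-1, and its corners give back rho. *)

Lemma sumr_pred1_seq (R : nmodType) (T : eqType) (S : seq T) (u : T) (F : T -> R) :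
  uniq S -> \sum_(w <- S) (if w == u then F w else 0) = if u \in S then F u else 0.
Proof.
move=> uniqS; rewrite -big_mkcond; case: ifP => uS.
  by rewrite -big_filter (filter_pred1_uniq uniqS uS) big_seq1.
by rewrite big1_seq // => w /andP[/eqP ->]; rewrite uS.
Qed.

Lemma fixspK (K : fieldType) (M : lmodType K) (f : {linear M -> M}) (x : fixsp f) :
  f (val x) = val x.
Proof. by case: x => x /=; rewrite inE => /eqP. Qed.

Definition linear_pack (K : fieldType) (U W : lmodType K) (f : U -> W) (fl : linear f) :
  {linear U -> W} := HB.pack f (GRing.isLinear.Build K U W *:%R f fl).

Arguments rmap_lin {K V HE I J s r} q e.
Arguments phi_lin {K V HE I J s r rho rho'} r v.
Arguments phi_comm {K V HE I J s r rho rho'} r e x.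

HB.instance Definition _ (K : fieldType) (V HE : Type) (I J : HE -> finType)
    (s : forall h, I h -> V) (r : forall h, J h -> V) (rho : QRep K s r) e :=
  GRing.isLinear.Build K _ _ _ (rmap rho e) (rmap_lin rho e).

HB.instance Definition _ (K : fieldType) (V HE : Type) (I J : HE -> finType)
    (s : forall h, I h -> V) (r : forall h, J h -> V) (rho rho' : QRep K s r)
    (p : RepHom rho rho') v :=
  GRing.isLinear.Build K _ _ _ (p v) (phi_lin p v).

Section DependentProduct.
Variables (K : fieldType) (T : Type) (P : T -> lmodType K).

Definition dprod := forall t, P t.

HB.instance Definition _ := gen_eqMixin dprod.
HB.instance Definition _ := gen_choiceMixin dprod.

Let dprod_ext (f g : dprod) : (forall t, f t = g t) -> f = g.
Proof. exact: functional_extensionality_dep. Qed.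

Definition dprod_zero : dprod := fun t => 0.
Definition dprod_opp (f : dprod) : dprod := fun t => - f t.
Definition dprod_add (f g : dprod) : dprod := fun t => f t + g t.
Definition dprod_scale (a : K) (f : dprod) : dprod := fun t => a *: f t.

Fact dprod_addA : associative dprod_add.
Proof. by move=> f g k; apply: dprod_ext => t; apply: addrA. Qed.
Fact dprod_addC : commutative dprod_add.
Proof. by move=> f g; apply: dprod_ext => t; apply: addrC. Qed.
Fact dprod_add0 : left_id dprod_zero dprod_add.
Proof. by move=> f; apply: dprod_ext => t; apply: add0r. Qed.
Fact dprod_addN : left_inverse dprod_zero dprod_opp dprod_add.
Proof. by move=> f; apply: dprod_ext => t; apply: addNr. Qed.

HB.instance Definition _ :=
  GRing.isZmodule.Build dprod dprod_addA dprod_addC dprod_add0 dprod_addN.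

Fact dprod_scaleA a b f : dprod_scale a (dprod_scale b f) = dprod_scale (a * b) f.
Proof. by apply: dprod_ext => t; apply: scalerA. Qed.
Fact dprod_scale1 : left_id 1 dprod_scale.
Proof. by move=> f; apply: dprod_ext => t; apply: scale1r. Qed.
Fact dprod_scaleDr : right_distributive dprod_scale +%R.
Proof. by move=> a f g; apply: dprod_ext => t; apply: scalerDr. Qed.
Fact dprod_scaleDl f : {morph dprod_scale^~ f : a b / a + b}.
Proof. by move=> a b; apply: dprod_ext => t; apply: scalerDl. Qed.

HB.instance Definition _ := GRing.Zmodule_isLmodule.Build K dprod
  dprod_scaleA dprod_scale1 dprod_scaleDr dprod_scaleDl.

Lemma dprod_linE a (f g : dprod) t : (a *: f + g) t = a *: f t + g t.
Proof. by []. Qed.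

Lemma dprod_sumE (A : Type) (q : seq A) (F : A -> dprod) t :
  (\sum_(a <- q) F a) t = \sum_(a <- q) F a t.
Proof. by elim/big_rec2: _ => // a f g _ <-. Qed.

End DependentProduct.

Section Single.
Variables (K : fieldType) (T : eqType) (P : T -> lmodType K).

Definition single t (x : P t) : dprod P :=
  fun t' => if t =P t' is ReflectT e then ecast t' (P t') e x else 0.

Lemma single_eq t (x : P t) : single x t = x.
Proof. by rewrite /single; case: eqP => // e; rewrite eq_axiomK. Qed.

Lemma single_neq t t' (x : P t) : t != t' -> single x t' = 0.
Proof. by rewrite /single; case: eqP. Qed.

Lemma singleE (f : dprod P) t t' : single (f t) t' = if t == t' then f t' else 0.
Proof. by case: eqP => [<-|/eqP]; [apply: single_eq | apply: single_neq]. Qed.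

Lemma single_is_linear t : linear (@single t).
Proof.
move=> a x y; apply: functional_extensionality_dep => t'.
by rewrite dprod_linE /single; case: eqP => [e|_]; [case: t' / e | rewrite scaler0 addr0].
Qed.

End Single.

Lemma sum_map_single (K : fieldType) (T : finType) (P : T -> lmodType K) (W : lmodType K)
    (F : forall t, P t -> W) t (x : P t) :
  (forall t', F t' 0 = 0) -> \sum_t' F t' (single x t') = F t x.
Proof.
move=> F0; rewrite (bigD1 t) //= single_eq big1 ?addr0 // => t' t't.
by rewrite single_neq 1?eq_sym.
Qed.

Lemma sum_single (K : fieldType) (T : finType) (P : T -> lmodType K) (f : dprod P) :
  \sum_t single (f t) = f.
Proof.
apply: functional_extensionality_dep => t'; rewrite dprod_sumE.
under eq_bigr do rewrite singleE.
by rewrite -big_mkcond big_pred1_eq.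
Qed.

Section DirectSum.
Variables (K : fieldType) (T : eqType) (P : T -> lmodType K).

Definition finsupp : {pred dprod P} :=
  fun f => `[< exists S : seq T, forall t, t \notin S -> f t = 0 >].

Fact finsupp_submod_closed : GRing.submod_closed finsupp.
Proof.
split; first by apply/asboolP; exists [::].
move=> a f g /asboolP[Sf f0] /asboolP[Sg g0]; apply/asboolP; exists (Sf ++ Sg) => t.
by rewrite mem_cat negb_or => /andP[tf tg]; rewrite dprod_linE f0 // g0 // scaler0 addr0.
Qed.

HB.instance Definition _ :=
  GRing.isSubmodClosed.Build K (dprod P) finsupp finsupp_submod_closed.

Definition dsum := {f : dprod P | f \in finsupp}.

HB.instance Definition _ := [isSub for (@sval _ (fun f => f \in finsupp)) : dsum -> dprod P].
HB.instance Definition _ := [Choice of dsum by <:].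
HB.instance Definition _ := [SubChoice_isSubLmodule of dsum by <:].

Lemma dsum_sumE (A : Type) (q : seq A) (F : A -> dsum) t :
  val (\sum_(a <- q) F a) t = \sum_(a <- q) val (F a) t.
Proof. by rewrite raddf_sum dprod_sumE. Qed.

Fact single_finsupp t (x : P t) : single x \in finsupp.
Proof.
by apply/asboolP; exists [:: t] => t'; rewrite inE eq_sym; apply: single_neq.
Qed.

Definition dsingle t (x : P t) : dsum := exist _ (single x) (single_finsupp x).

Fact dsingle_is_linear t : linear (@dsingle t).
Proof. by move=> a x y; apply: val_inj; rewrite /= single_is_linear. Qed.

Lemma dsum_expansion (m : dsum) : exists S : seq T, m = \sum_(t <- S) dsingle (val m t).
Proof.
have /asboolP[S m0] := valP m; exists (undup S).
apply: val_inj; apply: functional_extensionality_dep => t'.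
rewrite dsum_sumE; under eq_bigr do rewrite /= singleE.
rewrite (sumr_pred1_seq _ (fun=> val m t')) ?undup_uniq // mem_undup.
by case: ifPn => // /m0.
Qed.

End DirectSum.

HB.instance Definition _ (K : fieldType) (T : eqType) (P : T -> lmodType K) (t : T) :=
  GRing.isLinear.Build K (P t) (dsum P) *:%R (@dsingle K T P t) (@dsingle_is_linear K T P t).

Section Corner.
Variables (K : fieldType) (V HE : Type) (I J : HE -> finType)
  (s : forall h, I h -> V) (r : forall h, J h -> V) (M : RMod K s r).

Fact corner_subproof v (m : M) : actV M v m \in fixpred (actV M v).
Proof. by rewrite inE rel_VV. Qed.

Definition corner v (m : M) : fixsp (actV M v) := exist _ (actV M v m) (corner_subproof v m).

Lemma corner_is_linear v : linear (corner v).
Proof. by move=> a x y; apply: val_inj; rewrite /= linearP. Qed.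

Lemma cornerK v (x : fixsp (actV M v)) : corner v (val x) = x.
Proof. by apply: val_inj; rewrite /= fixspK. Qed.

End Corner.

HB.instance Definition _ (K : fieldType) (V HE : Type) (I J : HE -> finType)
    (s : forall h, I h -> V) (r : forall h, J h -> V) (M : RMod K s r) (v : V) :=
  GRing.isLinear.Build K M (fixsp (actV M v)) *:%R (corner v) (corner_is_linear v).

Section CornerDecomposition.
Variables (K : fieldType) (V : eqType) (HE : Type) (I J : HE -> finType)
  (s : forall h, I h -> V) (r : forall h, J h -> V) (M : RMod K s r).

Lemma actV_actV u v (m : M) : actV M u (actV M v m) = if u == v then actV M v m else 0.
Proof. by case: eqP => [->|uv]; [apply: rel_VV | apply: rel_VV0 => vu; apply: uv]. Qed.

Lemma corner_expansion (m : M) : exists S : seq V, uniq S /\ m = \sum_(v <- S) actV M v m.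
Proof.
have [t ->] := unital m; exists (undup [seq q.1 | q <- t]); split; first exact: undup_uniq.
symmetry; under eq_bigr do rewrite linear_sum.
rewrite exchange_big big_seq [RHS]big_seq; apply: eq_bigr => q tq.
under eq_bigr do rewrite actV_actV.
by rewrite (sumr_pred1_seq _ (fun=> actV M q.1 q.2)) ?undup_uniq // mem_undup map_f.
Qed.

Definition corner_support (m : M) : seq V := projT1 (cid (corner_expansion m)).

Lemma corner_support_uniq m : uniq (corner_support m).
Proof. exact: (proj1 (projT2 (cid (corner_expansion m)))). Qed.

Lemma corner_support_expansion m : m = \sum_(v <- corner_support m) actV M v m.
Proof. exact: (proj2 (projT2 (cid (corner_expansion m)))). Qed.

Lemma actV_notin_corner_support v m : v \notin corner_support m -> actV M v m = 0.
Proof.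
move=> vm; rewrite {1}(corner_support_expansion m) linear_sum.
under eq_bigr do rewrite actV_actV eq_sym.
by rewrite sumr_pred1_seq ?corner_support_uniq // (negbTE vm).
Qed.

Lemma corner_ext (x y : M) : (forall v, actV M v x = actV M v y) -> x = y.
Proof.
move=> xy; apply/eqP; rewrite -subr_eq0; apply/eqP.
by rewrite (corner_support_expansion (x - y)) big1 // => v _; rewrite linearB xy subrr.
Qed.

End CornerDecomposition.

Section ModuleToRepresentation.
Variables (K : fieldType) (V HE : Type) (I J : HE -> finType)
  (s : forall h, I h -> V) (r : forall h, J h -> V) (M : RMod K s r).

Lemma sum_actEs_actE h (x : I h -> M) (k : I h) :
  \sum_(j : J h) actEs M k j (\sum_(i : I h) actE M i j (x i)) = actV M (s k) (x k).
Proof.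
under eq_bigr do rewrite linear_sum.
rewrite exchange_big /=; under eq_bigr do rewrite rel_CK1.
by rewrite -big_mkcond big_pred1_eq.
Qed.

Lemma sum_actE_actEs h (y : J h -> M) (k : J h) :
  \sum_(i : I h) actE M i k (\sum_(j : J h) actEs M i j (y j)) = actV M (r k) (y k).
Proof.
under eq_bigr do rewrite linear_sum.
rewrite exchange_big /=; under eq_bigr do rewrite rel_CK2.
by rewrite -big_mkcond big_pred1_eq.
Qed.

Lemma val_Hmap_repOf h x (j : J h) :
  val (Hmap (repOf M) h x j) = \sum_(i : I h) actE M i j (val (x i)).
Proof. by rewrite raddf_sum. Qed.

Lemma repOf_condH : condH (repOf M).
Proof.
move=> h.
exists (fun (y : forall j, fixsp (actV M (r j))) i =>
          corner (s i) (\sum_(j : J h) actEs M i j (val (y j)))).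
- move=> x; apply: functional_extensionality_dep => i; apply: val_inj => /=.
  under eq_bigr do rewrite val_Hmap_repOf.
  by rewrite sum_actEs_actE rel_VV fixspK.
- move=> y; apply: functional_extensionality_dep => j; apply: val_inj.
  rewrite val_Hmap_repOf /=; under eq_bigr do rewrite rel_sE.
  by rewrite sum_actE_actEs fixspK.
Qed.

End ModuleToRepresentation.

Lemma repOf_faithful (K : fieldType) (V : eqType) (HE : Type) (I J : HE -> finType)
    (s : forall h, I h -> V) (r : forall h, J h -> V) (M N : RMod K s r) (f g : RHom M N) :
  (forall v x, Fmor f v x = Fmor g v x) -> forall m, f m = g m.
Proof.
move=> fg m; apply: corner_ext => v; rewrite -!hf_V.
exact: (congr1 val (fg v (corner v m))).
Qed.

Section RepHomOnCorners.
Variables (K : fieldType) (V HE : Type) (I J : HE -> finType)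
  (s : forall h, I h -> V) (r : forall h, J h -> V).
Variables (M N : RMod K s r) (p : RepHom (repOf M) (repOf N)).

Definition pcorner v (m : M) : N := val (p v (corner v m)).

Lemma pcorner_is_linear v : linear (pcorner v).
Proof. by move=> a x y; rewrite /pcorner !linearP. Qed.

End RepHomOnCorners.

HB.instance Definition _ (K : fieldType) (V HE : Type) (I J : HE -> finType)
    (s : forall h, I h -> V) (r : forall h, J h -> V) (M N : RMod K s r)
    (p : RepHom (repOf M) (repOf N)) v :=
  GRing.isLinear.Build K M N *:%R (pcorner p v) (pcorner_is_linear p v).

Section Fullness.
Variables (K : fieldType) (V : eqType) (HE : Type) (I J : HE -> finType)
  (s : forall h, I h -> V) (r : forall h, J h -> V).
Variables (M N : RMod K s r) (p : RepHom (repOf M) (repOf N)).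

Local Notation pc := (pcorner p).

Lemma actV_pcorner_id v m : actV N v (pc v m) = pc v m.
Proof. exact: fixspK. Qed.

Lemma pcorner_actV_id v m : pc v (actV M v m) = pc v m.
Proof. by rewrite /pcorner; congr (val (p v _)); apply: val_inj; rewrite /= rel_VV. Qed.

Lemma pcorner_actV u v m : pc u (actV M v m) = if u == v then pc v m else 0.
Proof.
case: eqP => [->|uv]; first exact: pcorner_actV_id.
by rewrite -pcorner_actV_id rel_VV0 ?linear0 // => vu; apply: uv.
Qed.

Lemma actV_pcorner u v m : actV N u (pc v m) = if u == v then pc v m else 0.
Proof. by rewrite -{1}actV_pcorner_id actV_actV actV_pcorner_id. Qed.

Lemma pcorner_actE h (i : I h) (j : J h) m :
  pc (r j) (actE M i j m) = actE N i j (pc (s i) m).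
Proof.
rewrite /pcorner; have -> : corner (r j) (actE M i j m) =
    rmap (repOf M) (mkEdge i j) (corner (s i) m).
  by apply: val_inj; rewrite /= rel_Er rel_sE.
exact: (congr1 val (phi_comm p (mkEdge i j) _)).
Qed.

(* p is only assumed to commute with the h_ij; by (CK1) in N an element of
   (+)_i N s(h)_i is recovered from its image under [rho_N(h)], which (CK2) in
   M computes. *)
Lemma pcorner_actEs h (i : I h) (j : J h) m :
  pc (s i) (actEs M i j m) = actEs N i j (pc (r j) m).
Proof.
have image_k k : \sum_(l : I h) actE N l k (pc (s l) (actEs M l j m)) =
    if j == k then pc (r j) m else 0.
  under eq_bigr do rewrite -pcorner_actE.
  rewrite -linear_sum rel_CK2; case: eqP => [<-|_]; last exact: linear0.
  exact: pcorner_actV_id.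
rewrite -actV_pcorner_id -(sum_actEs_actE (fun l => pc (s l) (actEs M l j m))).
under eq_bigr => k _ do rewrite image_k (fun_if (actEs N i k)) linear0 eq_sym.
by rewrite -big_mkcond big_pred1_eq.
Qed.

Definition glue (m : M) : N := \sum_(v <- corner_support m) pc v m.

Lemma actV_glue v m : actV N v (glue m) = pc v m.
Proof.
rewrite linear_sum; under eq_bigr do rewrite actV_pcorner eq_sym.
rewrite sumr_pred1_seq ?corner_support_uniq //.
case: ifPn => // /actV_notin_corner_support vm0.
by rewrite -pcorner_actV_id vm0 linear0.
Qed.

Lemma glue_corner v m : glue (actV M v m) = pc v m.
Proof. by apply: corner_ext => u; rewrite actV_glue pcorner_actV actV_pcorner. Qed.

Lemma glue_is_linear : linear glue.
Proof. by move=> a x y; apply: corner_ext => v; rewrite linearP !actV_glue linearP. Qed.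

Lemma glue_actV v m : glue (actV M v m) = actV N v (glue m).
Proof. by rewrite glue_corner actV_glue. Qed.

Lemma glue_actE h (i : I h) (j : J h) m : glue (actE M i j m) = actE N i j (glue m).
Proof. by rewrite -rel_Er glue_corner pcorner_actE -actV_glue rel_sE. Qed.

Lemma glue_actEs h (i : I h) (j : J h) m : glue (actEs M i j m) = actEs N i j (glue m).
Proof. by rewrite -rel_Ess glue_corner pcorner_actEs -actV_glue rel_rEs. Qed.

Definition glue_hom : RHom M N :=
  {| hf := glue; hf_lin := glue_is_linear;
     hf_V := glue_actV; hf_E := glue_actE; hf_Es := glue_actEs |}.

Lemma repOf_full : exists f : RHom M N, forall v x, Fmor f v x = p v x.
Proof.
exists glue_hom => v x; apply: val_inj => /=.
by rewrite -(fixspK x) glue_corner /pcorner cornerK.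
Qed.

End Fullness.

Lemma Hmap_is_linear (K : fieldType) (V HE : Type) (I J : HE -> finType)
    (s : forall h, I h -> V) (r : forall h, J h -> V) (rho : QRep K s r) h :
  linear (Hmap rho h : dprod (fun i : I h => rc rho (s h i)) -> dprod (fun j => rc rho (r h j))).
Proof.
move=> a x y; apply: functional_extensionality_dep => j; rewrite dprod_linE /Hmap.
by under eq_bigr do rewrite dprod_linE linearP; rewrite big_split /= -scaler_sumr.
Qed.

Section HmapInverse.
Variables (K : fieldType) (V HE : Type) (I J : HE -> finType)
  (s : forall h, I h -> V) (r : forall h, J h -> V) (rho : QRep K s r) (rhoH : condH rho).

Fact Hmap_linear_inverse h :
  exists g : {linear dprod (fun j : J h => rc rho (r j)) -> dprod (fun i => rc rho (s i))},
    cancel (Hmap rho h) g /\ cancel g (Hmap rho h).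
Proof.
have [g HmapK HinvK] := rhoH h.
by exists (linear_pack (can2_linear (f := linear_pack (Hmap_is_linear (rho := rho) (h := h)))
                                     HmapK HinvK)).
Qed.

Definition Hinv h := projT1 (cid (Hmap_linear_inverse h)).

Lemma HmapK h : cancel (Hmap rho h) (Hinv h).
Proof. exact: (proj1 (projT2 (cid (Hmap_linear_inverse h)))). Qed.

Lemma HinvK h : cancel (Hinv h) (Hmap rho h).
Proof. exact: (proj2 (projT2 (cid (Hmap_linear_inverse h)))). Qed.

End HmapInverse.

Section RepresentationToModule.
Variables (K : fieldType) (V : eqType) (HE : Type) (I J : HE -> finType)
  (s : forall h, I h -> V) (r : forall h, J h -> V) (rho : QRep K s r) (rhoH : condH rho).

Local Notation DS := (dsum (rc rho)).
Local Notation single_s h := (@single K (I h) (fun i => rc rho (s i)) _).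
Local Notation single_r h := (@single K (J h) (fun j => rc rho (r j)) _).

Definition vact u (m : DS) : DS := dsingle (val m u).

Definition eact h (i : I h) (j : J h) (m : DS) : DS :=
  @dsingle _ _ (rc rho) (r j) (rmap rho (mkEdge i j) (val m (s i))).

Definition esact h (i : I h) (j : J h) (m : DS) : DS :=
  @dsingle _ _ (rc rho) (s i) (Hinv rhoH h (single_r h (val m (r j))) i).

Fact vact_is_linear u : linear (vact u).
Proof. by move=> a x y; rewrite /vact linearP. Qed.

Fact eact_is_linear h (i : I h) (j : J h) : linear (eact i j).
Proof. by move=> a x y; rewrite /eact !linearP. Qed.

Fact esact_is_linear h (i : I h) (j : J h) : linear (esact i j).
Proof.
move=> a x y; rewrite /esact linearP dprod_linE single_is_linear linearP dprod_linE.
exact: linearP.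
Qed.

Lemma val_dsingle v (x : rc rho v) : val (dsingle x) v = x.
Proof. exact: single_eq. Qed.

Lemma vactK u m : vact u (vact u m) = vact u m.
Proof. by rewrite /vact val_dsingle. Qed.

Lemma vact_ortho u v m : u <> v -> vact v (vact u m) = 0.
Proof. by move/eqP=> uv; rewrite /vact /= single_neq // linear0. Qed.

Lemma eact_vact h (i : I h) (j : J h) m : eact i j (vact (s i) m) = eact i j m.
Proof. by rewrite /eact /vact val_dsingle. Qed.

Lemma vact_eact h (i : I h) (j : J h) m : vact (r j) (eact i j m) = eact i j m.
Proof. by rewrite /eact /vact val_dsingle. Qed.

Lemma esact_vact h (i : I h) (j : J h) m : esact i j (vact (r j) m) = esact i j m.
Proof. by rewrite /esact /vact val_dsingle. Qed.

Lemma vact_esact h (i : I h) (j : J h) m : vact (s i) (esact i j m) = esact i j m.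
Proof. by rewrite /esact /vact val_dsingle. Qed.

Lemma Hmap_single h (i : I h) (x : rc rho (s i)) :
  Hmap rho h (single_s h x) = fun j => rmap rho (mkEdge i j) x.
Proof.
apply: functional_extensionality_dep => j.
rewrite /Hmap (sum_map_single (W := rc rho (r j)) (F := fun i' => rmap rho (mkEdge i' j))) //.
by move=> i'; rewrite linear0.
Qed.

Lemma sum_esact_eact h (i k : I h) m :
  \sum_(j : J h) esact k j (eact i j m) = if i == k then vact (s i) m else 0.
Proof.
set x := val m (s i).
have Hinv_sum :
    \sum_(j : J h) Hinv rhoH h (single_r h (rmap rho (mkEdge i j) x)) k = single_s h x k.
  rewrite -(HmapK rhoH (single_s h x)) Hmap_single.
  by rewrite -(sum_single (fun j => rmap rho (mkEdge i j) x)) linear_sum dprod_sumE.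
rewrite /esact; under eq_bigr do rewrite /eact val_dsingle.
rewrite -linear_sum Hinv_sum /vact.
by case: eqP => [<-|/eqP ik]; rewrite ?single_eq ?single_neq ?linear0.
Qed.

Lemma sum_eact_esact h (j k : J h) m :
  \sum_(i : I h) eact i k (esact i j m) = if j == k then vact (r j) m else 0.
Proof.
rewrite /eact; under eq_bigr do rewrite /esact val_dsingle.
rewrite -linear_sum.
have -> : \sum_(i : I h) (rmap rho (mkEdge i k) (Hinv rhoH h (single_r h (val m (r j))) i)
    : rc rho (r k)) = Hmap rho h (Hinv rhoH h (single_r h (val m (r j)))) k by [].
rewrite HinvK (singleE (fun j => val m (r j))) /vact.
by case: eqP => [<-|_]; rewrite ?linear0.
Qed.

Lemma vact_unital m : exists t : seq (V * DS), m = \sum_(q <- t) vact q.1 q.2.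
Proof. by have [S mS] := dsum_expansion m; exists [seq (v, m) | v <- S]; rewrite big_map. Qed.

Definition moduleOf : RMod K s r :=
  {| mc := DS;
     actV := fun u => linear_pack (vact_is_linear u);
     actE := fun h i j => linear_pack (eact_is_linear i j);
     actEs := fun h i j => linear_pack (esact_is_linear i j);
     rel_VV := vactK; rel_VV0 := vact_ortho;
     rel_sE := eact_vact; rel_Er := vact_eact;
     rel_rEs := esact_vact; rel_Ess := vact_esact;
     rel_CK1 := sum_esact_eact; rel_CK2 := sum_eact_esact;
     unital := vact_unital |}.

Definition moduleOf_iso v (x : fixsp (actV moduleOf v)) : rc rho v := val (val x) v.

Fact moduleOf_iso_is_linear v : linear (@moduleOf_iso v).
Proof. by move=> a x y; rewrite /moduleOf_iso !linearP. Qed.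

Fact moduleOf_iso_comm (e : Edge I J) x :
  moduleOf_iso (rmap (repOf moduleOf) e x) = rmap rho e (moduleOf_iso x).
Proof. by case: e x => h i j x; apply: single_eq. Qed.

Definition moduleOf_hom : RepHom (repOf moduleOf) rho :=
  Build_RepHom _ _ _ _ _ _ _ (repOf moduleOf) rho
    (@moduleOf_iso) moduleOf_iso_is_linear moduleOf_iso_comm.

Lemma moduleOf_hom_bij v : bijective (moduleOf_hom v).
Proof.
exists (fun y => corner v (dsingle y : moduleOf)) => [x|y] /=.
  apply: val_inj; rewrite /= -[RHS](fixspK x) /=.
  by rewrite /vact /moduleOf_iso /= single_eq.
by rewrite /moduleOf_iso /= /vact /= !single_eq.
Qed.

Lemma repOf_essentially_surjective :
  exists (M : RMod K s r) (p : RepHom (repOf M) rho), forall v, bijective (p v).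
Proof. by exists moduleOf, moduleOf_hom; apply: moduleOf_hom_bij. Qed.

End RepresentationToModule.

Theorem mainTheorem13 (K : fieldType) (V HE : Type) (I J : HE -> finType)
  (s : forall h, I h -> V) (r : forall h, J h -> V)
  (HI : forall h, (0 < #|I h|)%N) (HJ : forall h, (0 < #|J h|)%N) :
  (forall M : RMod K s r, condH (repOf M)) /\
  (forall (M N : RMod K s r) (f g : RHom M N),
     (forall v x, Fmor f v x = Fmor g v x) -> forall m, f m = g m) /\
  (forall (M N : RMod K s r) (p : RepHom (repOf M) (repOf N)),
     exists f : RHom M N, forall v x, Fmor f v x = p v x) /\
  (forall rho : QRep K s r, condH rho ->
     exists (M : RMod K s r) (p : RepHom (repOf M) rho),
       forall v, bijective (p v)).
Proof.
pose Vc := {classic V}.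
split; first exact: repOf_condH.
split; first exact: (@repOf_faithful K Vc HE I J s r).
split; first exact: (@repOf_full K Vc HE I J s r).
exact: (@repOf_essentially_surjective K Vc HE I J s r).
Qed.
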